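(* Let $t$ be the Thue–Morse word. For every $n\geq 2$, one has $f_{aa}(n)\geq n-1$ and $f_{ab}(n)\geq n-1$.
   Context: The Thue–Morse word $t=0110100110010110\cdots$ is the fixed point starting with $0$ of the substitution $\mu:0\mapsto 01,\ 1\mapsto 10$. $f_{aa}(n)$ (resp. $f_{ab}(n)$) denotes the number of distinct factors of $t$ of length $n$ that begin and end with the same letter (resp. with different letters). *)

From mathcomp Require Import all_boot.
Set Implicit Arguments. Unset Strict Implicit. Unset Printing Implicit Defensive.

(* Letters: false = 0, true = 1. *)
Definition mu (w : seq bool) : seq bool := flatten [seq [:: a; ~~ a] | a <- w].

Definition mu_iter (k : nat) : seq bool := iter k mu [:: false].

(* The Thue-Morse word t = lim mu^k(0), as a function nat -> letter:
   t i is the i-th letter of mu^(i+1)(0), which has length 2^(i+1) > i. *)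
Definition thue_morse (i : nat) : bool := nth false (mu_iter i.+1) i.

Definition tm_factor (i n : nat) : seq bool := mkseq (fun j => thue_morse (i + j)) n.

Definition is_tm_factor (w : seq bool) : Prop := exists i, w = tm_factor i (size w).

(* f_aa(n) >= m : there are at least m distinct factors of length n
   beginning and ending with the same letter. *)
Definition faa_ge (n m : nat) : Prop :=
  exists s : seq (seq bool), [/\ uniq s, m <= size s &
    forall w, w \in s -> [/\ is_tm_factor w, size w = n &
                          head false w = last false w]].

Definition fab_ge (n m : nat) : Prop :=
  exists s : seq (seq bool), [/\ uniq s, m <= size s &
    forall w, w \in s -> [/\ is_tm_factor w, size w = n &
                          head false w != last false w]].

From mathcomp Require Import all_boot zify.

(* The factors of t of length n >= 4 split into those starting at an even
   position, which come from factors of length uphalf n through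
   t (2i) = t i, t (2i+1) = ~~ t i, and those starting at an odd position,
   which come from factors of length n./2.+1; the two families are disjoint
   because t contains no cube aaa.  Reading the first and last letters
   through the same recursion shows that the condition "first letter = last
   letter" is either preserved or flipped according to the parity of n, so
   by induction each family contributes (uphalf n).-1 and n./2 factors with
   any prescribed endpoint relation, n.-1 in total. *)

Local Notation t := thue_morse.

Lemma mu_cat (v w : seq bool) : mu (v ++ w) = mu v ++ mu w.
Proof. by rewrite /mu map_cat flatten_cat. Qed.

Lemma size_mu (w : seq bool) : size (mu w) = (size w).*2.
Proof. by elim: w => //= a w IH; rewrite /mu /= -/(mu w) IH doubleS. Qed.

Lemma size_mu_iter k : size (mu_iter k) = 2 ^ k.
Proof. by elim: k => //= k IH; rewrite -/(mu_iter k) size_mu IH expnS mul2n. Qed.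

Lemma nth_mu_double (w : seq bool) i :
  i < size w -> nth false (mu w) i.*2 = nth false w i.
Proof. by elim: w i => [|a w IH] [|i] //= Hi; rewrite /mu /= -/(mu w) ?doubleS /= ?IH. Qed.

Lemma nth_mu_doubleS (w : seq bool) i :
  i < size w -> nth false (mu w) i.*2.+1 = ~~ nth false w i.
Proof. by elim: w i => [|a w IH] [|i] //= Hi; rewrite /mu /= -/(mu w) ?doubleS /= ?IH. Qed.

Lemma mu_iter_prefix k : exists s, mu_iter k.+1 = mu_iter k ++ s.
Proof.
elim: k => [|k [s E]]; first by exists [:: true].
by exists (mu s); rewrite -[mu_iter k.+2]/(mu (mu_iter k.+1)) {1}E mu_cat.
Qed.

Lemma nth_mu_iter_mono k k' i :
  k <= k' -> i < 2 ^ k -> nth false (mu_iter k') i = nth false (mu_iter k) i.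
Proof.
move=> + Hi; elim: k' => [|k' IH]; first by rewrite leqn0 => /eqP ->.
rewrite leq_eqVlt => /predU1P [-> //|Hk].
have [s ->] := mu_iter_prefix k'.
have Hi' : i < 2 ^ k' by apply: leq_trans Hi (leq_pexp2l _ _).
by rewrite nth_cat size_mu_iter Hi' IH.
Qed.

Lemma lt_pow2S i : i < 2 ^ i.+1.
Proof. by apply: leq_trans (ltn_expl i (ltnSn 1)) (leq_pexp2l _ _). Qed.

Lemma thue_morseE k i : i < 2 ^ k -> t i = nth false (mu_iter k) i.
Proof.
move=> Hk; rewrite /thue_morse -(@nth_mu_iter_mono i.+1 (maxn k i.+1)) ?leq_maxr ?lt_pow2S //.
by rewrite (@nth_mu_iter_mono k) ?leq_maxl.
Qed.

Lemma thue_morse_double i : t i.*2 = t i.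
Proof.
have Hi := lt_pow2S i.
rewrite (@thue_morseE i.+2); last by rewrite expnS mul2n ltn_double.
by rewrite -[mu_iter i.+2]/(mu (mu_iter i.+1)) nth_mu_double ?size_mu_iter // -(thue_morseE Hi).
Qed.

Lemma thue_morse_doubleS i : t i.*2.+1 = ~~ t i.
Proof.
have Hi := lt_pow2S i.
rewrite (@thue_morseE i.+2); last by rewrite expnS mul2n ltn_Sdouble.
by rewrite -[mu_iter i.+2]/(mu (mu_iter i.+1)) nth_mu_doubleS ?size_mu_iter // -(thue_morseE Hi).
Qed.

Lemma thue_morse_no_cube i : t i = t i.+1 -> t i.+1 != t i.+2.
Proof.
rewrite -[i]odd_double_half; case: (odd i) => /=.
  rewrite -doubleS thue_morse_doubleS !thue_morse_double thue_morse_doubleS.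
  by case: (t i./2); case: (t i./2.+1).
by rewrite thue_morse_doubleS thue_morse_double; case: (t i./2).
Qed.

Lemma eq_tm_factor i j n :
  tm_factor i n = tm_factor j n <-> forall k, k < n -> t (i + k) = t (j + k).
Proof.
split=> [E k Hk | E].
  by have := congr1 (nth false ^~ k) E; rewrite !nth_mkseq.
apply: (@eq_from_nth _ false) => [|k]; rewrite !size_mkseq // => Hk.
by rewrite !nth_mkseq ?E.
Qed.

Lemma head_tm_factor i n : 0 < n -> head false (tm_factor i n) = t i.
Proof. by case: n => // n _; rewrite /= addn0. Qed.

Lemma last_tm_factor i n : 0 < n -> last false (tm_factor i n) = t (i + n.-1).
Proof. by case: n => // n _; rewrite -nth_last size_mkseq nth_mkseq. Qed.

Lemma tm_factor_double_inj i j n :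
  tm_factor i.*2 n = tm_factor j.*2 n -> tm_factor i (uphalf n) = tm_factor j (uphalf n).
Proof.
move=> /eq_tm_factor E; apply/eq_tm_factor => k; rewrite gtn_uphalf_double => /E.
by rewrite -!doubleD !thue_morse_double.
Qed.

Lemma tm_factor_doubleS_inj i j n : 0 < n ->
  tm_factor i.*2.+1 n = tm_factor j.*2.+1 n -> tm_factor i n./2.+1 = tm_factor j n./2.+1.
Proof.
move=> Hn /eq_tm_factor E; apply/eq_tm_factor => -[_ | k Hk].
  by move/E: Hn; rewrite !addn0 !thue_morse_doubleS => /negb_inj.
have /E : k.*2.+1 < n by lia.
by rewrite !addSn !addnS -!doubleD -!doubleS !thue_morse_double.
Qed.

(* Comparing the first four letters gives t j = t (j+1) = t (j+2). *)
Lemma tm_factor_double_neq_doubleS i j n : 3 < n -> tm_factor i.*2 n <> tm_factor j.*2.+1 n.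
Proof.
move=> Hn /eq_tm_factor E.
have E4 k : k < 4 -> t (i.*2 + k) = t (j.*2.+1 + k) by move=> Hk; apply: E; apply: leq_trans Hn.
have := E4 0.*2 isT; have := E4 0.*2.+1 isT; have := E4 1.*2 isT; have := E4 1.*2.+1 isT.
rewrite !addSn ?addnS -!doubleD -?doubleS !thue_morse_double !thue_morse_doubleS !addn0.
have := @thue_morse_no_cube j.
by case: (t i); case: (t i.+1); case: (t j); case: (t j.+1); case: (t j.+2) => // /(_ erefl).
Qed.

Definition ends_agree (i n : nat) : bool := t i == t (i + n.-1).

Lemma head_last_tm_factor i n :
  0 < n -> (head false (tm_factor i n) == last false (tm_factor i n)) = ends_agree i n.
Proof. by move=> Hn; rewrite head_tm_factor ?last_tm_factor. Qed.

Lemma ends_agree_double i n : 0 < n -> ends_agree i.*2 n = (ends_agree i (uphalf n) == odd n).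
Proof.
rewrite /ends_agree thue_morse_double => Hn; case: (boolP (odd n)) => On.
  have -> : i.*2 + n.-1 = (i + (uphalf n).-1).*2 by lia.
  by rewrite thue_morse_double eqb_id.
have -> : i.*2 + n.-1 = (i + (uphalf n).-1).*2.+1 by lia.
by rewrite thue_morse_doubleS eqbF_neg; case: (t i); case: (t _).
Qed.

Lemma ends_agree_doubleS i n : 0 < n -> ends_agree i.*2.+1 n = (ends_agree i n./2.+1 == odd n).
Proof.
rewrite /ends_agree thue_morse_doubleS => Hn; case: (boolP (odd n)) => On.
  have -> : i.*2.+1 + n.-1 = (i + n./2.+1.-1).*2.+1 by lia.
  by rewrite thue_morse_doubleS eqb_id; case: (t i); case: (t _).
have -> : i.*2.+1 + n.-1 = (i + n./2.+1.-1).*2 by lia.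
by rewrite thue_morse_double eqbF_neg; case: (t i); case: (t _).
Qed.

Lemma uniq_map_refine {A B C : eqType} {f : A -> B} {g : A -> C} {s : seq A} :
  (forall x y, f x = f y -> g x = g y) -> uniq (map g s) -> uniq (map f s).
Proof.
move=> fg; elim: s => //= x s IH /andP[gx gs]; rewrite IH // andbT.
by apply: contra gx => /mapP[y ys /fg e]; apply/mapP; exists y.
Qed.

Definition factor_starts (n : nat) (c : bool) (s : seq nat) : Prop :=
  [/\ n.-1 <= size s, uniq [seq tm_factor i n | i <- s] & all (fun i => ends_agree i n == c) s].

Lemma factor_starts_double_cat n c s1 s2 : 3 < n ->
  factor_starts (uphalf n) (c == odd n) s1 -> factor_starts n./2.+1 (c == odd n) s2 ->
  factor_starts n c ([seq i.*2 | i <- s1] ++ [seq i.*2.+1 | i <- s2]).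
Proof.
move=> Hn [size1 uniq1 ends1] [size2 uniq2 ends2].
have n_gt0 : 0 < n by apply: leq_trans Hn.
split.
- by rewrite size_cat !size_map; lia.
- rewrite map_cat cat_uniq -!map_comp.
  rewrite (uniq_map_refine (fun i j => @tm_factor_double_inj i j n) uniq1).
  rewrite (uniq_map_refine (fun i j => @tm_factor_doubleS_inj i j n n_gt0) uniq2) andbT /=.
  apply/hasPn => _ /mapP[j _ ->]; apply/mapP => -[i _ /=].
  exact/nesym/tm_factor_double_neq_doubleS.
- have flip b : b == (c == odd n) -> (b == odd n) == c by case: b; case: (odd n); case: (c).
  rewrite all_cat !all_map; apply/andP; split; apply/allP => i /=.
    by rewrite ends_agree_double // => /(allP ends1)/flip.
  by rewrite ends_agree_doubleS // => /(allP ends2)/flip.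
Qed.

Lemma exists_factor_starts n c : 1 < n -> exists s, factor_starts n c s.
Proof.
elim/ltn_ind: n c => n IH c Hn.
have [->|[->|Hn4]] : n = 2 \/ n = 3 \/ 3 < n by lia.
- by case: c; [exists [:: 1] | exists [:: 0]].
- by case: c; [exists [:: 2; 3] | exists [:: 0; 1]].
have [s1 starts1] : exists s, factor_starts (uphalf n) (c == odd n) s by apply: IH; lia.
have [s2 starts2] : exists s, factor_starts n./2.+1 (c == odd n) s by apply: IH; lia.
by exists ([seq i.*2 | i <- s1] ++ [seq i.*2.+1 | i <- s2]); apply: factor_starts_double_cat.
Qed.

Lemma tm_factors_with_ends n c : 1 < n -> exists s : seq (seq bool),
  [/\ uniq s, n - 1 <= size s &
      forall w, w \in s -> [/\ is_tm_factor w, size w = n & (head false w == last false w) = c]].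
Proof.
move=> Hn; have [s [size_s uniq_s ends_s]] := exists_factor_starts n c Hn.
exists [seq tm_factor i n | i <- s]; split=> //; first by rewrite size_map subn1.
move=> _ /mapP[i /(allP ends_s)/eqP ends_i ->]; rewrite size_mkseq.
by split=> //; [exists i; rewrite size_mkseq | rewrite head_last_tm_factor // ltnW].
Qed.

Theorem corollary1 : forall n : nat, 2 <= n -> faa_ge n (n - 1) /\ fab_ge n (n - 1).
Proof.
move=> n Hn; split.
  have [s [uniq_s size_s factors_s]] := tm_factors_with_ends n true Hn.
  by exists s; split=> // w /factors_s[? ? /eqP].
have [s [uniq_s size_s factors_s]] := tm_factors_with_ends n false Hn.
by exists s; split=> // w /factors_s[? ? /negbT].
Qed.
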